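(* For $\epsilon\in\mathbb{R}$ let $$\widetilde{\Phi}_{2,\epsilon}(x,y)=\left(\frac{(\epsilon^{2}-1)x+2\epsilon y}{2\epsilon x-2\epsilon^{2}y-\epsilon^{2}-1},\ \frac{-2\epsilon x+(\epsilon^{2}-1)y}{2\epsilon x-2\epsilon^{2}y-\epsilon^{2}-1}\right).$$ Then $\widetilde{\Phi}_{2,\epsilon}$ preserves the fibration defined by the pencil of conics $C_{2,h}=\{x^2+y^2-h(1+y)^2=0\}$. A proper parametrization of each curve $C_{2,h}$ is $$P_{2,h}(t)=\left(-\frac{2(ht-\sqrt{h})}{-1+(h-1)t^{2}}+\sqrt{h},\ -\frac{2t(ht-\sqrt{h})}{-1+(h-1)t^{2}}\right),$$ with inverse $$P_{2,h}^{-1}(x,y)=\frac{\sqrt{h}\,x+(h-1)y+h}{(h-1)x+\sqrt{h}(h-1)y+\sqrt{h}(h+1)}.$$ On each curve $C_{2,h}$, $\widetilde{\Phi}_{2,\epsilon}|_{C_{2,h}}$ is conjugate via $P_{2,h}$ to the M\''obius map $$M_{2,h}(t)=\frac{(1-\epsilon\sqrt{h})t+\epsilon}{-\epsilon(h+1)t+\epsilon\sqrt{h}+1}.$$ For a fixed $\epsilon$, on each closed curve $C_{2,h}$ the map $\widetilde{\Phi}_{2,\epsilon}$ is conjugate to a rotation with constant rotation number $\rho_\epsilon=\frac{1}{2\pi}\arg\left(\frac{1-\epsilon^{2}+2i\epsilon}{1+\epsilon^{2}}\right)$.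
   Context: $\widetilde{\Phi}_{2,\epsilon}$ is the pseudo-KHK map of the vector field $\dot x=-y+x^2$, $\dot y=x(1+y)$. A parametrization $P:\mathbb{R}\to C$ of a curve $C$ by rational functions is proper if it is birational onto $C$ (its inverse is rational). Conjugate via $P_{2,h}$ means $M_{2,h}=P_{2,h}^{-1}\circ\widetilde{\Phi}_{2,\epsilon}|_{C_{2,h}}\circ P_{2,h}$. $\arg$ takes values in $[0,2\pi)$. *)

From Stdlib Require Import Reals ClassicalEpsilon.
From Coquelicot Require Import Coquelicot.
Open Scope R_scope.

Definition Phi_den (e : R) (p : R * R) : R :=
  let (x, y) := p in 2 * e * x - 2 * e ^ 2 * y - e ^ 2 - 1.

Definition Phi2 (e : R) (p : R * R) : R * R :=
  let (x, y) := p in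
  (((e ^ 2 - 1) * x + 2 * e * y) / Phi_den e (x, y),
   (- 2 * e * x + (e ^ 2 - 1) * y) / Phi_den e (x, y)).

Definition C2 (h : R) (p : R * R) : Prop :=
  let (x, y) := p in x ^ 2 + y ^ 2 - h * (1 + y) ^ 2 = 0.

Definition P_den (h t : R) : R := -1 + (h - 1) * t ^ 2.

Definition P2 (h t : R) : R * R :=
  (- (2 * (h * t - sqrt h)) / P_den h t + sqrt h,
   - (2 * t * (h * t - sqrt h)) / P_den h t).

Definition Pinv_den (h : R) (p : R * R) : R :=
  let (x, y) := p in (h - 1) * x + sqrt h * (h - 1) * y + sqrt h * (h + 1).

Definition Pinv2 (h : R) (p : R * R) : R :=
  let (x, y) := p in (sqrt h * x + (h - 1) * y + h) / Pinv_den h (x, y).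

Definition M_den (e h t : R) : R := - e * (h + 1) * t + e * sqrt h + 1.

Definition M2 (e h t : R) : R := ((1 - e * sqrt h) * t + e) / M_den e h t.

Definition carg (z : C) : R :=
  epsilon (inhabits 0%R)
    (fun th => 0 <= th < 2 * PI /\ z = (Cmod z * cos th, Cmod z * sin th)).

Definition rho (e : R) : R :=
  carg ((RtoC (1 - e ^ 2) + RtoC (2 * e) * Ci) / RtoC (1 + e ^ 2))%C / (2 * PI).

Definition S1 (q : R * R) : Prop := let (u, v) := q in u ^ 2 + v ^ 2 = 1.

Definition rot (th : R) (q : R * R) : R * R :=
  let (u, v) := q in (cos th * u - sin th * v, sin th * u + cos th * v).

Definition continuous_on_set (D : R * R -> Prop) (f : R * R -> R * R) : Prop :=
  forall p, D p -> filterlim f (within D (locally p)) (locally (f p)).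

Definition conj_to_rotation (D : R * R -> Prop) (F : R * R -> R * R) (th : R) : Prop :=
  exists psi chi : R * R -> R * R,
    (forall p, D p -> S1 (psi p)) /\
    (forall q, S1 q -> D (chi q)) /\
    (forall p, D p -> chi (psi p) = p) /\
    (forall q, S1 q -> psi (chi q) = q) /\
    continuous_on_set D psi /\
    continuous_on_set S1 chi /\
    (forall p, D p -> psi (F p) = rot th (psi p)).

From Stdlib Require Import Reals Lra Psatz ClassicalEpsilon.
From Coquelicot Require Import Coquelicot.
Open Scope R_scope.

(** The conic [x^2 + y^2 = h (1 + y)^2] has its focus at the origin and
    directrix [y = -1].  In the homogeneous coordinates [(x : y : 1 + y)] the
    map [Phi2 e] acts as [(x, y, w) |-> (R (x, y), w)], where [R] is the
    rotation with cosine [(1 - e^2)/(1 + e^2)] and sine [2e/(1 + e^2)], i.e. by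
    the angle [2 pi rho e].  Hence it preserves [x^2 + y^2 - h w^2] up to a
    square factor, and for [h < 1] the radial projection from the focus,
    [(x, y) |-> (x, y) / (sqrt h (1 + y))], is a homeomorphism of the ellipse
    onto the unit circle conjugating [Phi2 e] to that rotation.  The statements
    about the parametrization and the Moebius map are rational identities,
    holding on the conic for [P2 (Pinv2 p) = p]. *)

Definition conic_poly (h : R) (p : R * R) : R :=
  let (x, y) := p in x ^ 2 + y ^ 2 - h * (1 + y) ^ 2.

Lemma conic_poly_Phi2 e h p : Phi_den e p <> 0 ->
  conic_poly h (Phi2 e p) = (1 + e ^ 2) ^ 2 * conic_poly h p / Phi_den e p ^ 2.
Proof. destruct p as [x y]; unfold conic_poly, Phi2, Phi_den; intros D; field; exact D. Qed.

Lemma Phi2_C2 e h p : C2 h p -> Phi_den e p <> 0 -> C2 h (Phi2 e p).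
Proof.
intros Hp D; destruct p as [x y].
assert (Hq := conic_poly_Phi2 e h (x, y) D); unfold conic_poly in Hq.
destruct (Phi2 e (x, y)) as [u v]; unfold C2 in *.
rewrite Hq, Hp; field; exact D.
Qed.

Ltac abstract_sqrt h :=
  let s := fresh "s" in
  assert (Hsqrt : sqrt h * sqrt h = h) by (apply sqrt_sqrt; lra);
  set (s := sqrt h) in *; clearbody s; subst h.

Lemma P2_C2 h t : 0 <= h -> P_den h t <> 0 -> C2 h (P2 h t).
Proof. intros Hh; unfold C2, P2, P_den; abstract_sqrt h; intros Pd; field; exact Pd. Qed.

Lemma Pinv2_P2 h t : 0 <= h -> P_den h t <> 0 -> Pinv_den h (P2 h t) <> 0 ->
  Pinv2 h (P2 h t) = t.
Proof.
intros Hh; unfold P2, Pinv2, Pinv_den, P_den; abstract_sqrt h; intros Pd Id.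
match goal with |- ?a / ?b = _ => replace a with (t * b) by (field; exact Pd) end.
exact (Rmult_div_l t _ Id).
Qed.

Lemma P2_Pinv2 h p : 0 < h -> C2 h p -> Pinv_den h p <> 0 -> P2 h (Pinv2 h p) = p.
Proof.
destruct p as [x y]; intros Hh; unfold C2, P2, Pinv2, Pinv_den, P_den.
abstract_sqrt h; intros Hp Dd.
assert (Hs : s <> 0) by (intros ->; lra).
set (N := s * x + (s * s - 1) * y + s * s) in *.
set (D := (s * s - 1) * x + s * (s * s - 1) * y + s * (s * s + 1)) in *.
assert (Pd : -1 + (s * s - 1) * (N / D) ^ 2 = - 2 * s / D).
{ assert (E : (s * s - 1) * N ^ 2 - D ^ 2 + 2 * s * D =
              (s * s - 1) * (x ^ 2 + y ^ 2 - s * s * (1 + y) ^ 2)) by (unfold N, D; ring).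
  rewrite Hp, Rmult_0_r in E.
  apply (Rmult_eq_reg_r (D ^ 2)); [|now apply pow_nonzero].
  field_simplify; [lra|exact Dd|exact Dd]. }
assert (Hx : s * s * N - s * D = s * (x - s)) by (unfold N, D; ring).
assert (Hy : N * (x - s) - y * D = s * (x ^ 2 + y ^ 2 - s * s * (1 + y) ^ 2))
  by (unfold N, D; ring).
rewrite Hp, Rmult_0_r in Hy.
replace (s * s * (N / D) - s) with (s * (x - s) / D) by (rewrite <- Hx; field; exact Dd).
rewrite Pd; f_equal.
- field; split; assumption.
- replace y with (N * (x - s) / D)
    by (replace (N * (x - s)) with (y * D) by lra; field; exact Dd).
  field; split; assumption.
Qed.

Lemma num_neq0 F X d : d <> 0 -> F = X / d -> F <> 0 -> X <> 0.
Proof. intros _ -> HF ->; apply HF, Rdiv_0_l. Qed.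

Lemma Pinv2_Phi2_P2 e h t : 0 <= h ->
  P_den h t <> 0 -> Phi_den e (P2 h t) <> 0 ->
  Pinv_den h (Phi2 e (P2 h t)) <> 0 -> M_den e h t <> 0 ->
  Pinv2 h (Phi2 e (P2 h t)) = M2 e h t.
Proof.
intros Hh; unfold P2, Pinv2, Pinv_den, P_den, Phi2, Phi_den, M2, M_den.
abstract_sqrt h; intros Pd Fd Id Md.
field; split; [exact Md|split; [exact Pd|]].
match goal with |- ?F <> 0 /\ _ => assert (Fn : F <> 0) end.
{ refine (num_neq0 _ _ _ Pd _ Fd); field; exact Pd. }
split; [exact Fn|].
refine (num_neq0 _ _ _ Fn _ Id); field; split; assumption.
Qed.

Lemma unit_circle_angle c s : c ^ 2 + s ^ 2 = 1 ->
  exists th, 0 <= th < 2 * PI /\ cos th = c /\ sin th = s.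
Proof.
intros Hcs.
assert (Hc : -1 <= c <= 1) by nra.
assert (Hsin : sin (acos c) = Rabs s).
{ rewrite sin_acos by exact Hc.
  replace (1 - c²) with (s ^ 2) by (unfold Rsqr; lra).
  rewrite <- sqrt_Rsqr_abs; unfold Rsqr; f_equal; ring. }
destruct (Rle_lt_dec 0 s) as [Hs|Hs].
- exists (acos c); rewrite Rabs_pos_eq in Hsin by exact Hs.
  pose proof (acos_bound c); pose proof PI_RGT_0.
  split; [lra|split; [apply cos_acos, Hc|exact Hsin]].
- exists (2 * PI - acos c); rewrite Rabs_left in Hsin by exact Hs.
  assert (Hc' : -1 < c < 1) by nra.
  pose proof (acos_bound_lt c Hc').
  rewrite cos_minus, sin_minus, cos_2PI, sin_2PI, cos_acos by exact Hc.
  split; [lra|split; [ring|rewrite Hsin; ring]].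
Qed.

Lemma cos_sin_carg c s : c ^ 2 + s ^ 2 = 1 ->
  cos (carg (c, s)) = c /\ sin (carg (c, s)) = s.
Proof.
intros Hcs.
assert (Hm : Cmod (c, s) = 1) by (unfold Cmod; cbn [fst snd]; rewrite Hcs; exact sqrt_1).
unfold carg; rewrite Hm.
match goal with |- context [epsilon ?i ?P] =>
  pose proof (epsilon_spec i P) as Hspec; set (th := epsilon i P) in * end.
destruct Hspec as [_ Hth].
{ destruct (unit_circle_angle c s Hcs) as [th0 [Hth0 [Hc Hs]]].
  exists th0; split; [exact Hth0|rewrite Hc, Hs, !Rmult_1_l; reflexivity]. }
injection Hth as Hc Hs; split; lra.
Qed.

Lemma cos_sin_rho e :
  cos (2 * PI * rho e) = (1 - e ^ 2) / (1 + e ^ 2) /\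
  sin (2 * PI * rho e) = 2 * e / (1 + e ^ 2).
Proof.
assert (He : 1 + e ^ 2 > 0) by nra.
assert (Hz : ((RtoC (1 - e ^ 2) + RtoC (2 * e) * Ci) / RtoC (1 + e ^ 2))%C =
             ((1 - e ^ 2) / (1 + e ^ 2), 2 * e / (1 + e ^ 2))).
{ unfold Cdiv, Cmult, Cinv, Cplus, RtoC, Ci; cbn [fst snd]; f_equal; field; lra. }
unfold rho; rewrite Hz.
replace (2 * PI * (_ / (2 * PI))) with (carg ((1 - e ^ 2) / (1 + e ^ 2), 2 * e / (1 + e ^ 2)))
  by (field; apply PI_neq0).
apply cos_sin_carg; field; lra.
Qed.

Lemma continuous_pair {U V W : UniformSpace} (f : U -> V) (g : U -> W) p :
  continuous f p -> continuous g p -> continuous (fun q => (f q, g q)) p.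
Proof.
intros Hf Hg; apply (continuous_comp_2 f g pair p Hf Hg).
apply (continuous_ext (fun z => z)); [intros [a b]; reflexivity|apply continuous_id].
Qed.

Lemma continuous_Rdiv {U : UniformSpace} (f g : U -> R) p :
  continuous f p -> continuous g p -> g p <> 0 -> continuous (fun q => f q / g q) p.
Proof.
intros Hf Hg Hp; apply (continuous_mult f (fun q => / g q)); [exact Hf|].
apply (continuous_comp g Rinv); [exact Hg|exact (continuous_Rinv _ Hp)].
Qed.

(* Dispatch on the syntactic head: letting [apply] unify, say, [Rdiv] against
   [Rmult] makes Rocq unfold the definitions of the real operations and hang. *)
Ltac continuity_rational :=
  lazymatch goal with
  | |- continuous (fun q => (@?f q, @?g q)) _ => apply continuous_pair
  | |- continuous (fun q => @?f q / @?g q) _ => apply continuous_Rdiv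
  | |- continuous (fun q => @?f q * @?g q) _ => apply (continuous_mult (K := R_AbsRing))
  | |- continuous (fun q => @?f q + @?g q) _ => apply (continuous_plus (V := R_NormedModule))
  | |- continuous (fun q => @?f q - @?g q) _ => apply (continuous_minus (V := R_NormedModule))
  | |- continuous fst _ => apply (continuous_fst (U := R_UniformSpace) (V := R_UniformSpace))
  | |- continuous snd _ => apply (continuous_snd (U := R_UniformSpace) (V := R_UniformSpace))
  | |- continuous (fun _ => _) _ => apply continuous_const
  end; try continuity_rational.

Lemma Phi_den_neq0_C2 e h p : h < 1 -> C2 h p -> Phi_den e p <> 0.
Proof.
destruct p as [x y]; unfold C2, Phi_den; intros Hh Hp D0.
assert (He : 0 < 1 + e ^ 2) by nra.
set (a := (e ^ 2 - 1) * x + 2 * e * y).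
set (b := - 2 * e * x + (e ^ 2 - 1) * y).
assert (Hb : b = - (1 + e ^ 2) * (1 + y)) by (unfold b; lra).
assert (Hy : 1 + y <> 0) by (intros Hy; replace y with (-1) in Hp by lra; nra).
assert (Hb0 : b <> 0) by (rewrite Hb; apply Rmult_integral_contrapositive; split; lra).
assert (Hab : a ^ 2 + b ^ 2 = (1 + e ^ 2) ^ 2 * (x ^ 2 + y ^ 2)) by (unfold a, b; ring).
assert (a ^ 2 + (1 - h) * b ^ 2 = 0) by (rewrite Hb in Hab |- *; nra).
assert (b ^ 2 > 0) by (apply pow2_gt_0; exact Hb0).
nra.
Qed.

Section FocalProjection.

Variable r : R.
Hypothesis r_bounds : 0 < r < 1.

Definition conic_to_circle (p : R * R) : R * R :=
  (fst p / (r * (1 + snd p)), snd p / (r * (1 + snd p))).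

Definition circle_to_conic (q : R * R) : R * R :=
  (r * fst q / (1 - r * snd q), r * snd q / (1 - r * snd q)).

Lemma C2_directrix_neq0 x y : C2 (r * r) (x, y) -> 1 + y <> 0.
Proof. unfold C2; intros Hp Hy; replace y with (-1) in Hp by lra; nra. Qed.

Lemma S1_denom_neq0 u v : S1 (u, v) -> 1 - r * v <> 0.
Proof. unfold S1; intros Hq Hv; nra. Qed.

Lemma conic_to_circle_S1 p : C2 (r * r) p -> S1 (conic_to_circle p).
Proof.
destruct p as [x y]; intros Hp; pose proof (C2_directrix_neq0 x y Hp) as Hy.
unfold C2, S1, conic_to_circle in *; cbn [fst snd].
replace 1 with (1 + (x ^ 2 + y ^ 2 - r * r * (1 + y) ^ 2) / (r * r * (1 + y) ^ 2)) at 3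
  by (rewrite Hp; field; split; lra).
field; split; lra.
Qed.

Lemma circle_to_conic_C2 q : S1 q -> C2 (r * r) (circle_to_conic q).
Proof.
destruct q as [u v]; intros Hq; pose proof (S1_denom_neq0 u v Hq) as Hv.
unfold C2, S1, circle_to_conic in *; cbn [fst snd].
replace 0 with (r * r * (u ^ 2 + v ^ 2 - 1) / (1 - r * v) ^ 2) by (rewrite Hq; field; exact Hv).
field; exact Hv.
Qed.

Lemma circle_to_conicK p : C2 (r * r) p -> circle_to_conic (conic_to_circle p) = p.
Proof.
destruct p as [x y]; intros Hp; pose proof (C2_directrix_neq0 x y Hp).
unfold circle_to_conic, conic_to_circle; cbn [fst snd]; f_equal; field; split; lra.
Qed.

Lemma conic_to_circleK q : S1 q -> conic_to_circle (circle_to_conic q) = q.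
Proof.
destruct q as [u v]; intros Hq; pose proof (S1_denom_neq0 u v Hq).
unfold circle_to_conic, conic_to_circle; cbn [fst snd]; f_equal; field; split; lra.
Qed.

Lemma continuous_conic_to_circle : continuous_on_set (C2 (r * r)) conic_to_circle.
Proof.
intros [x y] Hp; pose proof (C2_directrix_neq0 x y Hp) as Hy.
apply (filterlim_filter_le_1 (F := locally (x, y))); [apply filter_le_within|].
change (continuous conic_to_circle (x, y)); unfold conic_to_circle.
continuity_rational; cbn [fst snd].
all: apply Rmult_integral_contrapositive; split; lra.
Qed.

Lemma continuous_circle_to_conic : continuous_on_set S1 circle_to_conic.
Proof.
intros [u v] Hq; pose proof (S1_denom_neq0 u v Hq) as Hv.
apply (filterlim_filter_le_1 (F := locally (u, v))); [apply filter_le_within|].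
change (continuous circle_to_conic (u, v)); unfold circle_to_conic.
continuity_rational; cbn [fst snd]; exact Hv.
Qed.

Lemma conic_to_circle_Phi2 e p : C2 (r * r) p ->
  conic_to_circle (Phi2 e p) = rot (2 * PI * rho e) (conic_to_circle p).
Proof.
intros Hp; assert (D := Phi_den_neq0_C2 e (r * r) p ltac:(nra) Hp).
destruct p as [x y]; pose proof (C2_directrix_neq0 x y Hp) as Hy.
assert (He : 0 < 1 + e ^ 2) by nra.
unfold Phi2, conic_to_circle, rot in *; cbn [fst snd].
destruct (cos_sin_rho e) as [-> ->].
set (d := Phi_den e (x, y)) in *.
replace (1 + (- 2 * e * x + (e ^ 2 - 1) * y) / d) with (- (1 + e ^ 2) * (1 + y) / d)
  by (unfold d, Phi_den; field; exact D).
f_equal; field; repeat split; lra.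
Qed.

Lemma Phi2_conj_to_rotation_focal e :
  conj_to_rotation (C2 (r * r)) (Phi2 e) (2 * PI * rho e).
Proof.
exists conic_to_circle, circle_to_conic; repeat split.
- exact conic_to_circle_S1.
- exact circle_to_conic_C2.
- exact circle_to_conicK.
- exact conic_to_circleK.
- exact continuous_conic_to_circle.
- exact continuous_circle_to_conic.
- exact (conic_to_circle_Phi2 e).
Qed.

End FocalProjection.

Lemma Phi2_conj_to_rotation e h : 0 < h < 1 ->
  conj_to_rotation (C2 h) (Phi2 e) (2 * PI * rho e).
Proof.
intros Hh; rewrite <- (sqrt_sqrt h) by lra.
apply Phi2_conj_to_rotation_focal.
split; [apply sqrt_lt_R0; lra|].
rewrite <- sqrt_1; apply sqrt_lt_1; lra.
Qed.

Theorem proposition16 (e : R) :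
  (* Phi preserves each conic of the pencil *)
  (forall (h : R) (p : R * R), C2 h p -> Phi_den e p <> 0 -> C2 h (Phi2 e p)) /\
  (* P_{2,h} is a proper parametrization of C_{2,h} with inverse Pinv2 *)
  (forall h : R, 0 < h ->
     (forall t, P_den h t <> 0 -> C2 h (P2 h t)) /\
     (forall t, P_den h t <> 0 -> Pinv_den h (P2 h t) <> 0 ->
        Pinv2 h (P2 h t) = t) /\
     (forall p, C2 h p -> Pinv_den h p <> 0 -> P_den h (Pinv2 h p) <> 0 ->
        P2 h (Pinv2 h p) = p)) /\
  (* conjugacy to the Moebius map M_{2,h} *)
  (forall h : R, 0 < h -> forall t : R,
     P_den h t <> 0 -> Phi_den e (P2 h t) <> 0 ->
     Pinv_den h (Phi2 e (P2 h t)) <> 0 -> M_den e h t <> 0 ->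
     Pinv2 h (Phi2 e (P2 h t)) = M2 e h t) /\
  (* on each closed curve (0 < h < 1), conjugate to the rotation by 2 pi rho_e *)
  (forall h : R, 0 < h < 1 ->
     conj_to_rotation (C2 h) (Phi2 e) (2 * PI * rho e)).
Proof.
split; [exact (Phi2_C2 e)|].
split; [|split].
- intros h Hh; split; [|split].
  + intros t; exact (P2_C2 h t (Rlt_le _ _ Hh)).
  + intros t; exact (Pinv2_P2 h t (Rlt_le _ _ Hh)).
  + intros p Hp Id _; exact (P2_Pinv2 h p Hh Hp Id).
- intros h Hh t; exact (Pinv2_Phi2_P2 e h t (Rlt_le _ _ Hh)).
- exact (Phi2_conj_to_rotation e).
Qed.
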